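(* Let $n$ be a positive integer, $g=3n+2$, and let $G=\{\ell_1<\dots<\ell_g\}$ be a pure $(2n+1)$-sparse gapset of genus $g$ with multiplicity $m$ and depth $q\le 3$. Let $\alpha=\max\{i:\ell_{i+1}-\ell_i=2n+1\}$. Then $\ell_\alpha\le 2m-1$.
   Context: A gapset is a finite set $G\subset\mathbb{N}=\{1,2,\dots\}$ such that whenever $z\in G$ and $z=x+y$ with $x,y\in\mathbb{N}$, then $x\in G$ or $y\in G$; its genus is $g=\#G$ (a nonempty gapset of genus $g$ is contained in $[1,2g-1]$). Multiplicity $m(G)=\min\{s\in\mathbb{N}:s\notin G\}$; conductor $c(G)=\min\{s\in\mathbb{N}: s+t\notin G\ \forall t\in\mathbb{N}_0\}$; depth $q(G)=\lceil c(G)/m(G)\rceil$. $G$ is pure $\kappa$-sparse if $\ell_{i+1}-\ell_i\le\kappa$ for all $i$ with equality for some $i$. *)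

From mathcomp Require Import all_boot.
Set Implicit Arguments. Unset Strict Implicit. Unset Printing Implicit Defensive.

(* A gapset G ⊂ ℕ = {1,2,...} is represented by the strictly increasing
   list of its elements [:: ℓ_1; ...; ℓ_g]. *)
Definition is_gapset (G : seq nat) : Prop :=
  [/\ sorted ltn G,
      all (fun x => 0 < x) G &
      forall z x y, z \in G -> 0 < x -> 0 < y -> z = x + y ->
        (x \in G) || (y \in G)].

Definition genus (G : seq nat) : nat := size G.

(* ℓ_i, 1-indexed *)
Definition ell (G : seq nat) (i : nat) : nat := nth 0 G i.-1.

(* multiplicity: least s >= 1 with s ∉ G (searched in 1..#G+1, which
   necessarily contains an element outside G) *)
Definition mult (G : seq nat) : nat :=
  nth 0 [seq s <- iota 1 (size G).+1 | s \notin G] 0.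

(* conductor: least s >= 1 with s + t ∉ G for all t >= 0, i.e. every
   element of G is < s; searched in 1..(sum of G)+1 *)
Definition cond (G : seq nat) : nat :=
  nth 0 [seq s <- iota 1 (sumn G).+1 | all (fun x => x < s) G] 0.

(* depth q = ceil (c / m) *)
Definition depth (G : seq nat) : nat := (cond G + mult G - 1) %/ mult G.

Definition pure_sparse (k : nat) (G : seq nat) : Prop :=
  (forall i, 1 <= i < size G -> ell G i.+1 - ell G i <= k) /\
  (exists2 i, 1 <= i < size G & ell G i.+1 - ell G i = k).

(* Put [y = l_alpha] and [z = y + 2n + 1].  None of the [2n] integers strictly
   between [y] and [z] is a gap, and [z - k] is one of them for [0 < k <= 2n],
   so each such [k] is a gap and [m > 2n].  As [m] is not a gap, neither is
   [2m = m + m], so [y >= 2m] would force [y >= 2m + 1 >= 4n + 3] and hence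
   [z >= 6n + 4 = 2g], whereas every gap is at most [2g - 1]. *)

From mathcomp Require Import all_boot zify.

Lemma sum_nat_of_bool (r : seq nat) (a : pred nat) :
  \sum_(j <- r) (a j : nat) = count a r.
Proof. by rewrite -sum1_count [in RHS]big_mkcond; apply: eq_bigr => i _; case: (a i). Qed.

Lemma mult_spec {G : seq nat} : uniq G -> mult G \notin G /\ 0 < mult G.
Proof.
move=> uG.
have has_out : has (fun s => s \notin G) (iota 1 (size G).+1).
  apply/negPn/negP => /hasPn allin.
  have : size (iota 1 (size G).+1) <= size G.
    by apply: uniq_leq_size (iota_uniq _ _) _ => x /allin; rewrite negbK.
  by rewrite size_iota ltnn.
have : mult G \in [seq s <- iota 1 (size G).+1 | s \notin G].
  by apply: mem_nth; rewrite size_filter_gt0.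
by rewrite mem_filter mem_iota => /andP[-> /andP[-> _]].
Qed.

Lemma sorted_ltn_nth_gap (G : seq nat) (i j : nat) :
  sorted ltn G -> i.+1 < size G -> nth 0 G i < j < nth 0 G i.+1 -> j \notin G.
Proof.
move=> srt iG /andP[lo hi]; apply/negP => jG.
have kG : index j G < size G by rewrite index_mem.
have ej : nth 0 G (index j G) = j by apply: nth_index.
have mono := sorted_ltn_nth ltn_trans 0 srt.
case: (ltngtP (index j G) i) => [ki|ik|ki].
- by have := mono _ i kG (ltnW iG) ki; rewrite ej; lia.
- case: (ltngtP (index j G) i.+1) => [|k1|k1]; first by lia.
    by have := mono i.+1 _ iG kG k1; rewrite ej; lia.
  by move: hi; rewrite -k1 ej ltnn.
- by move: lo; rewrite -ki ej ltnn.
Qed.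

Section Gapset.

Context {G : seq nat} (G_gapset : is_gapset G).

Lemma gapset_uniq : uniq G.
Proof. by case: G_gapset => srt _ _; exact: (sorted_uniq ltn_trans ltnn srt). Qed.

Lemma gapset_split {z k : nat} : z \in G -> 0 < k < z -> (k \in G) || (z - k \in G).
Proof. by case: G_gapset => _ _ gap zG kz; apply: (gap z) => //; lia. Qed.

Lemma double_mult_notin : 2 * mult G \notin G.
Proof.
have [mG m0] := mult_spec gapset_uniq.
apply/negP => mmG.
have := gapset_split mmG (ltac:(lia) : 0 < mult G < 2 * mult G).
by rewrite (_ : 2 * mult G - mult G = mult G) ?orbb ?(negbTE mG) //; lia.
Qed.

(* Of each pair [{k, z - k}] with [0 < k < z] one member is a gap, so [G]
   contains at least half of [1 .. z - 1], plus [z] itself. *)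
Lemma gapset_lt_double_size {z : nat} : z \in G -> z < 2 * size G.
Proof.
move=> zG; have z0 : 0 < z by case: G_gapset => _ /allP pos _; exact: pos.
pose c := \sum_(1 <= j < z) ((j \in G) : nat).
have reflect_sum : \sum_(1 <= j < z) ((z - j \in G) : nat) = c.
  rewrite big_nat_rev; apply: eq_big_nat => j /andP[j1 jz].
  by congr (nat_of_bool (_ \in G)); lia.
have cover : z - 1 <= c + c.
  rewrite -{2}reflect_sum -big_split /=.
  rewrite -[z - 1]muln1 -sum_nat_const_nat big_nat_cond [X in _ <= X]big_nat_cond.
  apply: leq_sum => j /andP[/andP[j1 jz] _].
  by have := gapset_split zG (ltac:(lia) : 0 < j < z); case: (j \in G); case: (_ \in G).
have count_le : c.+1 <= size G.
  have -> : c.+1 = \sum_(1 <= j < z.+1) ((j \in G) : nat).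
    by rewrite big_nat_recr //= zG addn1.
  rewrite sum_nat_of_bool -size_filter.
  apply: uniq_leq_size; first by rewrite filter_uniq // iota_uniq.
  by move=> x; rewrite mem_filter => /andP[].
lia.
Qed.

Lemma gap_below_jump {i d k : nat} :
  i.+1 < size G -> nth 0 G i.+1 = nth 0 G i + d -> 0 < k < d -> k \in G.
Proof.
move=> iG jump kd.
have zG : nth 0 G i.+1 \in G by apply: mem_nth.
have := gapset_split zG (ltac:(lia) : 0 < k < nth 0 G i.+1).
have : nth 0 G i.+1 - k \notin G.
  by case: G_gapset => srt _ _; apply: (@sorted_ltn_nth_gap G i) => //; lia.
by move/negbTE => ->; rewrite orbF.
Qed.

Lemma mult_gt_jump {i d : nat} :
  i.+1 < size G -> nth 0 G i.+1 = nth 0 G i + d -> d <= mult G.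
Proof.
move=> iG jump; have [mG m0] := mult_spec gapset_uniq.
rewrite leqNgt; apply/negP => md.
by move: mG; rewrite (gap_below_jump (k := mult G) iG jump) //; lia.
Qed.

End Gapset.

Theorem mainTheorem17 (n : nat) (G : seq nat) (alpha : nat) :
  0 < n ->
  is_gapset G ->
  genus G = 3 * n + 2 ->
  pure_sparse (2 * n + 1) G ->
  depth G <= 3 ->
  1 <= alpha < size G ->
  ell G alpha.+1 - ell G alpha = 2 * n + 1 ->
  (forall i, 1 <= i < size G -> ell G i.+1 - ell G i = 2 * n + 1 -> i <= alpha) ->
  ell G alpha <= 2 * mult G - 1.
Proof.
move=> n0 gG gen _ _ /andP[a1 aG] + _; rewrite /ell /genus /= in gen *.
have ap : alpha.-1.+1 = alpha by rewrite prednK.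
set y := nth 0 G alpha.-1; set z := nth 0 G alpha => jump_eq.
have jump : nth 0 G alpha.-1.+1 = y + (2 * n + 1) by rewrite ap -/z; lia.
have m_big := mult_gt_jump gG (ltac:(lia) : alpha.-1.+1 < size G) jump.
have yG : y \in G by apply: mem_nth (leq_ltn_trans (leq_pred _) aG).
have y_ne : y != 2 * mult G.
  by apply: contraNneq (double_mult_notin gG) => <-.
have := gapset_lt_double_size gG (mem_nth 0 aG : z \in G).
lia.
Qed.
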